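(* Let $K$ be a unital commutative ring, let $A$ be a $K$-algebra, and let $L\subseteq A$ be a Lie ideal such that $[A,L^2]\subseteq L$. Then \[ A[L,L^2]A\subseteq A[L,L^2]\subseteq L^2. \] Moreover, if $L_0\subseteq L$ is a subset and $m,n\in\mathbb{N}$ satisfy $[A,L_0]_1\subseteq\Sigma^nL_0$ and $[L_0^{\cdot 2},A]_1\subseteq\Sigma^mL_0$, then \[ A\cdot[L_0,L_0^{\cdot 2}]_1\subseteq \Sigma^{2n+m}L_0^{\cdot 2}\quad\text{and}\quad A\cdot[L_0,L_0^{\cdot 2}]_1\cdot A\subseteq \Sigma^{(2n+m)(1+3n)}L_0^{\cdot 2}. \]
   Context: $K$-algebras are associative and not necessarily unital. For $x,y\in A$, $[x,y]=xy-yx$. For subsets $X,Y\subseteq A$: $[X,Y]$ is the additive subgroup generated by all $[x,y]$ ($x\in X,y\in Y$); $XY$ is the additive subgroup generated by all $xy$, $X^2=XX$, and $XYZ=(XY)Z$; $[X,Y]_1=\{[x,y]: x\in X,y\in Y\}$; $X\cdot Y=\{xy:x\in X,y\in Y\}$, $X^{\cdot 2}=X\cdot X$, and $X\cdot Y\cdot Z$ is the set of triple products $xyz$; $\Sigma^n X=\{x_1+\dots+x_n: x_i\in X\}$. A Lie ideal of $A$ is a $K$-linear subspace $L$ with $[A,L]\subseteq L$. *)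

From HB Require Import structures.
From mathcomp Require Import all_boot all_order all_algebra.
Set Implicit Arguments. Unset Strict Implicit. Unset Printing Implicit Defensive.
Import GRing.Theory.
Local Open Scope ring_scope.

Definition is_Kalgebra (K : comPzRingType) (A : lmodType K) (mul : A -> A -> A) : Prop :=
  [/\ (forall x y z, mul (mul x y) z = mul x (mul y z)),
      (forall x y z, mul (x + y) z = mul x z + mul y z),
      (forall x y z, mul x (y + z) = mul x y + mul x z),
      (forall (k : K) x y, mul (k *: x) y = k *: mul x y) &
      (forall (k : K) x y, mul x (k *: y) = k *: mul x y)].

Section Sets.
Variables (K : comPzRingType) (A : lmodType K) (mul : A -> A -> A).

Definition subs (X Y : A -> Prop) : Prop := forall x, X x -> Y x.

Definition setA : A -> Prop := fun _ => True.

Inductive addgen (X : A -> Prop) : A -> Prop :=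
| addgen_base x : X x -> addgen X x
| addgen_0 : addgen X 0
| addgen_add x y : addgen X x -> addgen X y -> addgen X (x + y)
| addgen_opp x : addgen X x -> addgen X (- x).

Definition lie (x y : A) : A := mul x y - mul y x.

(* [X,Y]_1 : set of commutators *)
Definition lie1 (X Y : A -> Prop) : A -> Prop :=
  fun z => exists x y, X x /\ Y y /\ z = lie x y.
(* [X,Y] : additive subgroup generated by commutators *)
Definition lieS (X Y : A -> Prop) : A -> Prop := addgen (lie1 X Y).

(* X . Y : set of products *)
Definition dot (X Y : A -> Prop) : A -> Prop :=
  fun z => exists x y, X x /\ Y y /\ z = mul x y.
Definition dot3 (X Y Z : A -> Prop) : A -> Prop :=
  fun w => exists x y z, X x /\ Y y /\ Z z /\ w = mul (mul x y) z.
(* XY : additive subgroup generated by products *)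
Definition prodS (X Y : A -> Prop) : A -> Prop := addgen (dot X Y).

(* Sigma^n X : sums of n elements of X *)
Definition sigma (n : nat) (X : A -> Prop) : A -> Prop :=
  fun z => exists s : 'I_n -> A, (forall i, X (s i)) /\ z = \sum_(i < n) s i.

Definition lie_ideal (L : A -> Prop) : Prop :=
  [/\ L 0, (forall x y, L x -> L y -> L (x + y)),
      (forall (k : K) x, L x -> L (k *: x)) &
      subs (lieS setA L) L].
End Sets.

From mathcomp Require Import all_boot all_order all_algebra.
Set Implicit Arguments. Unset Strict Implicit. Unset Printing Implicit Defensive.
Import GRing.Theory.
Local Open Scope ring_scope.

(* Three identities of associative algebras carry the argument:
     [z, xy] = [z, x] y + x [z, y],   a [l, w] = [a l, w] + [w, a] l,
     (a c) b = (a b) c - a [b, c].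
   The first makes L^2 stable under [A, -], and with Jacobi so is C = [L, L^2].
   In the second, [a l, w] lies in L^2 and so does [w, a] l, since
   [w, a] lies in L by the hypothesis [A, L^2] ⊆ L; hence A C ⊆ L^2. The third
   gives A C A ⊆ A C because [b, c] lies in C again.
   The counting bounds come from the same identities applied to a single
   a [l, xy], which splits into 2n + m products, and to [b, [l, xy]], which
   Jacobi splits into 3n commutators of the same shape [l', x'y']. *)

Section AdditiveMaps.
Variables (U V : zmodType) (f : U -> V).
Hypothesis fD : {morph f : x y / x + y}.

Lemma additive_0 : f 0 = 0.
Proof. by apply: (addrI (f 0)); rewrite -fD !addr0. Qed.

Lemma additive_N : {morph f : x / - x}.
Proof. by move=> x; apply: (addrI (f x)); rewrite -fD !subrr additive_0. Qed.

Lemma additive_B : {morph f : x y / x - y}.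
Proof. by move=> x y; rewrite fD additive_N. Qed.

End AdditiveMaps.

Section AdditiveSpans.
Variables (K : comPzRingType) (A : lmodType K).
Implicit Types (X Y : A -> Prop) (f : A -> A).

Lemma addgen_morph f X Y : {morph f : x y / x + y} ->
  (forall x, X x -> addgen Y (f x)) -> forall x, addgen X x -> addgen Y (f x).
Proof.
move=> fD fXY w; elim: w / => [x /fXY // | | x y _ Yx _ Yy | x _ Yx].
- by rewrite (additive_0 fD); apply: addgen_0.
- by rewrite fD; apply: addgen_add.
- by rewrite (additive_N fD); apply: addgen_opp.
Qed.

Lemma addgen_subs X Y : subs X (addgen Y) -> subs (addgen X) (addgen Y).
Proof. exact: (@addgen_morph id). Qed.

Lemma sigma0 X : sigma 0 X 0.
Proof. by exists (fun _ => 0); split; [case | rewrite big_ord0]. Qed.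

Lemma sigma1 X x : X x -> sigma 1 X x.
Proof. by exists (fun _ => x); rewrite big_ord1. Qed.

Lemma sigmaD X p q y z : sigma p X y -> sigma q X z -> sigma (p + q) X (y + z).
Proof.
move=> [s [Xs ->]] [t [Xt ->]].
exists (fun i => match split i with inl j => s j | inr j => t j end); split.
  by move=> i; case: (split i).
rewrite big_split_ord; congr (_ + _); apply: eq_bigr => i _.
  by rewrite (unsplitK (inl i)).
by rewrite (unsplitK (inr i)).
Qed.

Lemma sigma_bind f X Y p k z : {morph f : x y / x + y} ->
  (forall x, X x -> sigma k Y (f x)) -> sigma p X z -> sigma (p * k) Y (f z).
Proof.
move=> fD fXY [s [Xs ->]]; elim: p s Xs => [|p IHp] s Xs.
  by rewrite big_ord0 (additive_0 fD); apply: sigma0.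
by rewrite big_ord_recl fD mulSn; apply: sigmaD; [apply: fXY | apply: IHp].
Qed.

Lemma sigma_map f X Y n z : {morph f : x y / x + y} ->
  (forall x, X x -> Y (f x)) -> sigma n X z -> sigma n Y (f z).
Proof.
move=> fD fXY Xz; rewrite -[n]muln1; apply: sigma_bind Xz => // x /fXY.
exact: sigma1.
Qed.

End AdditiveSpans.

Section Algebra.
Variables (K : comPzRingType) (A : lmodType K) (mul : A -> A -> A).
Hypothesis Halg : is_Kalgebra mul.
Local Notation "x ** y" := (mul x y) (at level 40, left associativity).
Local Notation "[ x , y ]" := (lie mul x y).

Lemma mulA x y z : x ** y ** z = x ** (y ** z).
Proof. by case: Halg. Qed.

Lemma mulDl z : {morph mul^~ z : x y / x + y}.
Proof. by move=> x y; case: Halg. Qed.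

Lemma mulDr z : {morph mul z : x y / x + y}.
Proof. by move=> x y; case: Halg. Qed.

Lemma mulBl z : {morph mul^~ z : x y / x - y}.
Proof. exact: additive_B (mulDl z). Qed.

Lemma mulBr z : {morph mul z : x y / x - y}.
Proof. exact: additive_B (mulDr z). Qed.

Lemma lieDl z : {morph lie mul^~ z : x y / x + y}.
Proof. by move=> x y; rewrite /lie mulDl mulDr opprD addrACA. Qed.

Lemma lieDr z : {morph lie mul z : x y / x + y}.
Proof. by move=> x y; rewrite /lie mulDl mulDr opprD addrACA. Qed.

Lemma lie_antisym x y : [x, y] = - [y, x].
Proof. by rewrite /lie opprB. Qed.

Lemma lieMr z x y : [z, x ** y] = [z, x] ** y + x ** [z, y].
Proof. by rewrite /lie mulBl mulBr !mulA addrA subrK. Qed.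

Lemma lieE x y : [x, y] = x ** y - y ** x.
Proof. by []. Qed.

Lemma lie_jacobi x y z : [x, [y, z]] = [[x, y], z] + [y, [x, z]].
Proof.
rewrite [[y, z]]lieE (additive_B (lieDr x)) !lieMr.
rewrite [[[x, y], z]]lieE [[y, [x, z]]]lieE.
by rewrite opprD [RHS]addrACA (addrC (- _)).
Qed.

Lemma mul_lier a x y : a ** [x, y] = [a ** x, y] + [y, a] ** x.
Proof. by rewrite /lie mulBl mulBr !mulA addrA subrK. Qed.

Lemma mulAC_lie a x y : a ** x ** y = a ** y ** x - a ** [y, x].
Proof. by rewrite /lie mulBr !mulA opprB addrC subrK. Qed.

Section Spans.
Implicit Types X Y : A -> Prop.

Lemma mem_dot X Y x y : X x -> Y y -> dot mul X Y (x ** y).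
Proof. by move=> Xx Yy; exists x, y. Qed.

Lemma mem_lie1 X Y x y : X x -> Y y -> lie1 mul X Y [x, y].
Proof. by move=> Xx Yy; exists x, y. Qed.

Lemma mem_prodS X Y x y : X x -> Y y -> prodS mul X Y (x ** y).
Proof. by move=> Xx Yy; apply/addgen_base/mem_dot. Qed.

Lemma mem_lieS X Y x y : X x -> Y y -> lieS mul X Y [x, y].
Proof. by move=> Xx Yy; apply/addgen_base/mem_lie1. Qed.

End Spans.

Section LieIdealSquare.
Variable L : A -> Prop.
Hypotheses (HL : lie_ideal mul L) (HL2 : subs (lieS mul (@setA _ A) (prodS mul L L)) L).
Local Notation L2 := (prodS mul L L).
Local Notation C := (lieS mul L L2).
Local Notation AC := (prodS mul (@setA _ A) C).

Lemma lie_idealN x : L x -> L (- x).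
Proof. by case: HL => _ _ LZ _ Lx; rewrite -scaleN1r; apply: LZ. Qed.

Lemma lie_ideal_lie z x : L x -> L [z, x].
Proof. by case: HL => _ _ _ Llie Lx; apply/Llie/mem_lieS. Qed.

Lemma lie_L2_A_in_L w a : L2 w -> L [w, a].
Proof. by move=> L2w; rewrite lie_antisym; apply/lie_idealN/HL2/mem_lieS. Qed.

Lemma L2_lie z w : L2 w -> L2 [z, w].
Proof.
apply: addgen_morph (lieDr z) _ w => _ [x [y [Lx [Ly ->]]]].
by rewrite lieMr; apply: addgen_add; apply: mem_prodS => //; apply: lie_ideal_lie.
Qed.

Lemma C_lie z c : C c -> C [z, c].
Proof.
apply: addgen_morph (lieDr z) _ c => _ [x [w [Lx [L2w ->]]]].
rewrite lie_jacobi; apply: addgen_add; apply: mem_lieS => //.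
  exact: lie_ideal_lie.
exact: L2_lie.
Qed.

Lemma mul_C_L2 a c : C c -> L2 (a ** c).
Proof.
apply: addgen_morph (mulDr a) _ c => _ [x [w [Lx [L2w ->]]]].
rewrite mul_lier; apply: addgen_add; first exact: L2_lie.
exact: (mem_prodS (lie_L2_A_in_L _ L2w) Lx).
Qed.

Lemma AC_mulr x b : AC x -> AC (x ** b).
Proof.
apply: addgen_morph (mulDl b) _ x => _ [a [c [_ [Cc ->]]]].
rewrite mulAC_lie; apply/addgen_add/addgen_opp; apply: mem_prodS => //.
exact: C_lie.
Qed.

End LieIdealSquare.

Section CommutatorCounting.
Variables (L0 : A -> Prop) (m n : nat).
Hypotheses (HA : subs (lie1 mul (@setA _ A) L0) (sigma n L0))
  (HL0sq : subs (lie1 mul (dot mul L0 L0) (@setA _ A)) (sigma m L0)).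
Local Notation Q := (dot mul L0 L0).
Local Notation E := (lie1 mul L0 Q).

Lemma lie_L0_sigma a l : L0 l -> sigma n L0 [a, l].
Proof. by move=> L0l; apply/HA/mem_lie1. Qed.

Lemma lie_Q_sigma x y a : L0 x -> L0 y -> sigma m L0 [x ** y, a].
Proof. by move=> L0x L0y; apply/HL0sq/mem_lie1 => //; apply: mem_dot. Qed.

Lemma sigma_mull k x z : L0 x -> sigma k L0 z -> sigma k Q (x ** z).
Proof. by move=> L0x; apply: sigma_map (mulDr x) _ => y; apply: mem_dot. Qed.

Lemma sigma_mulr k y z : L0 y -> sigma k L0 z -> sigma k Q (z ** y).
Proof. by move=> L0y; apply: sigma_map (mulDl y) _ => x L0x; apply: mem_dot. Qed.

Lemma mul_E_sigma a e : E e -> sigma (2 * n + m) Q (a ** e).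
Proof.
move=> [l [_ [L0l [[x [y [L0x [L0y ->]]]] ->]]]].
rewrite mul_lier lieMr mul2n -addnn; apply: sigmaD; first apply: sigmaD.
- exact/sigma_mulr/lie_L0_sigma.
- exact/sigma_mull/lie_L0_sigma.
- exact/sigma_mulr/lie_Q_sigma.
Qed.

Lemma lie_E_sigma b e : E e -> sigma (3 * n) E [b, e].
Proof.
move=> [l [_ [L0l [[x [y [L0x [L0y ->]]]] ->]]]].
rewrite lie_jacobi (lieMr b) lieDr (mulSn 2) mul2n -addnn.
apply: sigmaD; last apply: sigmaD.
- apply: sigma_map (lieDl (x ** y)) _ (lie_L0_sigma b L0l) => u L0u.
  by apply: mem_lie1 => //; apply: mem_dot.
- apply: (sigma_map (f := fun u => [l, u ** y])) (lie_L0_sigma b L0x)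
    => [u v | u L0u].
    by rewrite mulDl lieDr.
  by apply: mem_lie1 => //; apply: mem_dot.
- apply: (sigma_map (f := fun u => [l, x ** u])) (lie_L0_sigma b L0y)
    => [u v | u L0u].
    by rewrite mulDr lieDr.
  by apply: mem_lie1 => //; apply: mem_dot.
Qed.

Lemma mul_E_mul_sigma a e b : E e ->
  sigma ((2 * n + m) * (1 + 3 * n)) Q (a ** e ** b).
Proof.
move=> Ee; rewrite mulAC_lie -(additive_N (mulDl _)).
rewrite mulnDr muln1 [(_ * (3 * n))%N]mulnC.
apply: sigmaD; first exact: mul_E_sigma.
apply: sigma_bind (mulDr (- a)) _ (lie_E_sigma b Ee) => e' Ee'.
exact: mul_E_sigma.
Qed.

End CommutatorCounting.

End Algebra.

Theorem lemma3p3 (K : comPzRingType) (A : lmodType K) (mul : A -> A -> A)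
  (Halg : is_Kalgebra mul) (L : A -> Prop)
  (HL : lie_ideal mul L)
  (HL2 : subs (lieS mul (@setA _ A) (prodS mul L L)) L) :
  let L2 := prodS mul L L in
  let C := lieS mul L L2 in
  (subs (prodS mul (prodS mul (@setA _ A) C) (@setA _ A)) (prodS mul (@setA _ A) C)
   /\ subs (prodS mul (@setA _ A) C) L2)
  /\
  (forall (L0 : A -> Prop) (m n : nat),
     subs L0 L ->
     subs (lie1 mul (@setA _ A) L0) (sigma n L0) ->
     subs (lie1 mul (dot mul L0 L0) (@setA _ A)) (sigma m L0) ->
     subs (dot mul (@setA _ A) (lie1 mul L0 (dot mul L0 L0)))
          (sigma (2 * n + m)%N (dot mul L0 L0))
     /\ subs (dot3 mul (@setA _ A) (lie1 mul L0 (dot mul L0 L0)) (@setA _ A))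
          (sigma ((2 * n + m)%N * (1 + 3 * n)) (dot mul L0 L0))).
Proof.
move=> L2 C; split.
  split; apply: addgen_subs.
    by move=> _ [x [b [ACx [_ ->]]]]; apply: AC_mulr.
  by move=> _ [a [c [_ [Cc ->]]]]; apply: mul_C_L2.
(* The counting part does not need L0 ⊆ L. *)
move=> L0 m n _ HA HL0sq.
split=> [_ [a [e [_ [Ee ->]]]] | _ [a [e [b [_ [Ee [_ ->]]]]]]].
  exact: mul_E_sigma.
exact: mul_E_mul_sigma.
Qed.
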